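(* Fix a dimension $D\geqslant 2$. There is a constant $C>0$ (depending only on $D$) such that for every integer $n\geqslant 2$, every real $s$, and every integer $k$ with $0\leqslant k<n$, $$\delta(n,s,k)\leqslant C\,\frac{s}{(k+1)^{1/D}},$$ i.e. $\delta(n,s,k)=O\big(s/(k+1)^{1/D}\big)$.
   Context: For a graph $G$ whose vertices are points in $\mathbb{R}^D$, each edge $(u,v)$ has weight equal to the Euclidean distance $d(u,v)$ (edges may cross or overlap), and $d_G(u,v)$ is the length of a shortest path in $G$ between $u$ and $v$. The dilation of $G$ is $\Delta(G)=\max_{u\neq v\in V(G)} d_G(u,v)/d(u,v)$. For a finite set $S$ of $n$ points and an integer $k\ge0$, $\Delta(S,k)$ is the minimum of $\Delta(G)$ over all graphs $G$ with vertex set exactly $S$ and exactly $n-1+k$ edges. The spread $s(S)$ of a finite point set $S$ with $|S|\ge2$ is the ratio of the largest to the smallest pairwise Euclidean distance in $S$. $\delta(n,s,k)=\sup\{\Delta(S,k): S\subset\mathbb{R}^D,\ |S|=n,\ s(S)\leqslant s\}$. *)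

From Stdlib Require Import Reals List Lia.
Import ListNotations.
Open Scope R_scope.

(* A point of R^D is represented by its coordinate function; only the
   coordinates 0..D-1 are used. *)
Definition point := nat -> R.

Fixpoint sqsum (D : nat) (x y : point) : R :=
  match D with
  | O => 0
  | S d => sqsum d x y + (x d - y d) ^ 2
  end.

Definition dist (D : nat) (x y : point) : R := sqrt (sqsum D x y).

(* A set S of n points is given as an injective enumeration P 0, ..., P (n-1). *)
Definition distinct_points (n : nat) (P : nat -> point) : Prop :=
  forall i j, (i < n)%nat -> (j < n)%nat -> i <> j -> P i <> P j.

(* Spread: s(S) <= s, i.e. max pairwise distance <= s * min pairwise distance. *)
Definition spread_le (D n : nat) (P : nat -> point) (s : R) : Prop :=
  forall i j l m, (i < n)%nat -> (j < n)%nat -> (l < n)%nat -> (m < n)%nat ->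
    i <> j -> l <> m -> dist D (P i) (P j) <= s * dist D (P l) (P m).

(* A graph on vertex set {P 0,...,P (n-1)}: a list of edges (pairs of distinct
   vertex indices); the number of edges is the length of the list. *)
Definition graph_wf (n : nat) (E : list (nat * nat)) : Prop :=
  forall e, In e E -> (fst e < n)%nat /\ (snd e < n)%nat /\ fst e <> snd e.

Fixpoint walk_ok (E : list (nat * nat)) (w : list nat) : Prop :=
  match w with
  | a :: ((b :: _) as t) => (In (a, b) E \/ In (b, a) E) /\ walk_ok E t
  | _ => True
  end.

Fixpoint walk_len (D : nat) (P : nat -> point) (w : list nat) : R :=
  match w with
  | a :: ((b :: _) as t) => dist D (P a) (P b) + walk_len D P t
  | _ => 0
  end.

Definition dilation_le (D n : nat) (P : nat -> point) (E : list (nat * nat))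
    (t : R) : Prop :=
  forall u v, (u < n)%nat -> (v < n)%nat -> u <> v ->
    exists rest, walk_ok E (u :: rest) /\ last (u :: rest) u = v /\
      walk_len D P (u :: rest) <= t * dist D (P u) (P v).

Definition Delta_le (D n : nat) (P : nat -> point) (k : nat) (t : R) : Prop :=
  exists E, length E = (n - 1 + k)%nat /\ graph_wf n E /\ dilation_le D n P E t.

(* Let [dl] be the minimal distance, so that all distances lie in [[dl, s dl]], and let
   [q = (k+1)^(1/D)].  If [q] is bounded by a constant, a star (dilation [2 s]) suffices.
   Otherwise cut space into cubes of side [h ~ s dl / q]: only [O(q^D / K)] of them are
   occupied, [K] being the number of Yao cones, so joining every point to a representative
   of its cube and adding a Yao graph (one nearest neighbour per cone) on the representatives
   costs at most [n - 1 + k] edges.  The Yao graph has dilation 2, since the nearest neighbour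
   [w] of [u] in the cone of [v] satisfies [d(w,v) <= d(u,v) - d(u,w)/2]; the detour through
   the representatives adds [O(D h)], i.e. dilation [2 + O(s / q)].  Packing gives
   [n <= (5 D s)^D], hence [q = O(s)], which absorbs the additive 2. *)

From Stdlib Require Import Reals ZArith List Lra Lia Classical.
(* Imported after [Reals], so that [dist] is the Euclidean distance of [Defs], not Rtopology's. *)
From Pilot Require Import Defs.
Import ListNotations.
Open Scope R_scope.

Lemma Rabs_le_bounds x b : Rabs x <= b -> - b <= x <= b.
Proof. intros H. pose proof (Rle_abs x). pose proof (Rle_abs (- x)). rewrite Rabs_Ropp in *. lra. Qed.

Lemma sqsum_nonneg D p q : 0 <= sqsum D p q.
Proof. induction D; simpl; [lra|]. pose proof (pow2_ge_0 (p D - q D)); lra. Qed.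

Lemma dist_nonneg D p q : 0 <= dist D p q.
Proof. apply sqrt_pos. Qed.

Lemma dist_sym D p q : dist D p q = dist D q p.
Proof.
  unfold dist; f_equal.
  induction D as [|D IH]; simpl; [reflexivity|]. rewrite IH; ring.
Qed.

Lemma dist_self D p : dist D p p = 0.
Proof.
  unfold dist; rewrite <- sqrt_0; f_equal.
  induction D as [|D IH]; simpl; [reflexivity|]. rewrite IH; ring.
Qed.

Lemma dist_coord_le D p q t : (t < D)%nat -> Rabs (p t - q t) <= dist D p q.
Proof.
  intros Ht. rewrite <- sqrt_Rsqr_abs. apply sqrt_le_1_alt. unfold Rsqr.
  induction D as [|D IH]; simpl; [lia|].
  pose proof (sqsum_nonneg D p q). pose proof (pow2_ge_0 (p D - q D)).
  destruct (Nat.eq_dec t D) as [->|Hne]; [lra|].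
  specialize (IH ltac:(lia)). lra.
Qed.

Lemma dist_le_of_coords D p q e : 0 <= e ->
  (forall t, (t < D)%nat -> Rabs (p t - q t) <= e) -> dist D p q <= INR D * e.
Proof.
  intros He Hc.
  assert (Hsq : sqsum D p q <= INR D * e ^ 2).
  { induction D as [|D IH]; cbn [sqsum]; [simpl; lra|].
    rewrite S_INR. specialize (IH ltac:(intros; apply Hc; lia)).
    assert (Habs := Hc D ltac:(lia)).
    rewrite <- pow2_abs. pose proof (Rabs_pos (p D - q D)). nra. }
  destruct D as [|D]; [unfold dist; simpl; rewrite sqrt_0; lra|].
  assert (1 <= INR (S D)) by (rewrite S_INR; pose proof (pos_INR D); lra).
  rewrite <- (sqrt_square (INR (S D) * e)) by nra.
  apply sqrt_le_1_alt. nra.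
Qed.

Lemma cauchy_schwarz_plane a b c d :
  a * c + b * d <= sqrt (a ^ 2 + b ^ 2) * sqrt (c ^ 2 + d ^ 2).
Proof.
  rewrite <- sqrt_mult by nra.
  apply Rle_trans with (Rabs (a * c + b * d)); [apply Rle_abs|].
  rewrite <- sqrt_Rsqr_abs. apply sqrt_le_1_alt. unfold Rsqr.
  assert (Hlagrange : (a ^ 2 + b ^ 2) * (c ^ 2 + d ^ 2) - (a * c + b * d) * (a * c + b * d)
                      = (a * d - b * c) ^ 2) by ring.
  pose proof (pow2_ge_0 (a * d - b * c)). lra.
Qed.

Lemma dist_triangle D p q r : dist D p r <= dist D p q + dist D q r.
Proof.
  unfold dist. induction D as [|D IH]; cbn [sqsum]; [rewrite sqrt_0; lra|].
  set (x := sqrt (sqsum D p q)) in IH. set (y := sqrt (sqsum D q r)) in IH.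
  assert (Hx : x ^ 2 = sqsum D p q) by (unfold x; rewrite <- Rsqr_pow2; apply Rsqr_sqrt, sqsum_nonneg).
  assert (Hy : y ^ 2 = sqsum D q r) by (unfold y; rewrite <- Rsqr_pow2; apply Rsqr_sqrt, sqsum_nonneg).
  assert (0 <= x) by apply sqrt_pos. assert (0 <= y) by apply sqrt_pos.
  rewrite <- Hx, <- Hy.
  set (a := p D - q D). set (b := q D - r D).
  replace (p D - r D) with (a + b) by (unfold a, b; ring).
  pose proof (cauchy_schwarz_plane x a y b) as Hcs.
  set (X := sqrt (x ^ 2 + a ^ 2)) in *. set (Y := sqrt (y ^ 2 + b ^ 2)) in *.
  assert (HX : X ^ 2 = x ^ 2 + a ^ 2) by (unfold X; rewrite <- Rsqr_pow2; apply Rsqr_sqrt; nra).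
  assert (HY : Y ^ 2 = y ^ 2 + b ^ 2) by (unfold Y; rewrite <- Rsqr_pow2; apply Rsqr_sqrt; nra).
  assert (0 <= X) by apply sqrt_pos. assert (0 <= Y) by apply sqrt_pos.
  assert (Hpr : sqsum D p r <= (x + y) ^ 2).
  { pose proof (sqrt_pos (sqsum D p r)).
    rewrite <- (Rsqr_sqrt (sqsum D p r)) by apply sqsum_nonneg. unfold Rsqr. nra. }
  rewrite <- (sqrt_square (X + Y)) by lra. apply sqrt_le_1_alt. nra.
Qed.

Lemma dist_toward D u v c : c <= 1 ->
  dist D (fun t => u t + c * (v t - u t)) v = (1 - c) * dist D u v.
Proof.
  intros Hc. unfold dist.
  assert (Hsq : sqsum D (fun t => u t + c * (v t - u t)) v = (1 - c) ^ 2 * sqsum D u v).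
  { induction D as [|D IH]; cbn [sqsum]; [ring|]. rewrite IH; ring. }
  rewrite Hsq, sqrt_mult_alt by apply pow2_ge_0.
  rewrite <- Rsqr_pow2, sqrt_Rsqr by lra. reflexivity.
Qed.

Lemma dist_le_of_close_directions D u v w :
  0 < dist D u w -> dist D u w <= dist D u v ->
  (forall t, (t < D)%nat ->
     Rabs ((w t - u t) / dist D u w - (v t - u t) / dist D u v) <= / (2 * INR D)) ->
  dist D w v <= dist D u v - dist D u w / 2.
Proof.
  intros Ha Hab Hdir.
  assert (HD : 0 < INR D).
  { destruct D; [unfold dist in Ha; simpl in Ha; rewrite sqrt_0 in Ha; lra|].
    apply lt_0_INR; lia. }
  set (a := dist D u w) in *. set (b := dist D u v) in *.
  (* Compare [w] with the point [z] of the segment [[u, v]] at distance [a] from [u]. *)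
  set (z := fun t => u t + a / b * (v t - u t)).
  assert (Hzv : dist D z v = b - a).
  { unfold z. rewrite dist_toward.
    - fold b. field. lra.
    - apply Rmult_le_reg_r with b; [lra|]. unfold Rdiv. rewrite Rmult_assoc, Rinv_l; lra. }
  assert (Hwz : dist D w z <= a / 2).
  { replace (a / 2) with (INR D * (a / (2 * INR D))) by (field; lra).
    apply dist_le_of_coords; [apply Rle_mult_inv_pos; lra|].
    intros t Ht.
    replace (w t - z t) with (a * ((w t - u t) / a - (v t - u t) / b)) by (unfold z; field; lra).
    rewrite Rabs_mult, (Rabs_right a) by lra.
    replace (a / (2 * INR D)) with (a * / (2 * INR D)) by reflexivity.
    apply Rmult_le_compat_l; [lra|]. apply Hdir, Ht. }
  pose proof (dist_triangle D w z v). lra.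
Qed.

Definition floor_nat (r : R) : nat := Z.to_nat (Int_part r).

Lemma floor_nat_spec r : 0 <= r -> INR (floor_nat r) <= r < INR (floor_nat r) + 1.
Proof.
  intros Hr. destruct (base_Int_part r) as [Hle Hgt].
  assert (Hz : (0 <= Int_part r)%Z).
  { assert (Hgt1 : IZR (-1) < IZR (Int_part r)) by (simpl; lra). apply lt_IZR in Hgt1. lia. }
  unfold floor_nat. rewrite INR_IZR_INZ, Z2Nat.id by exact Hz. lra.
Qed.

Fixpoint nat_tuples (d B : nat) : list (list nat) :=
  match d with
  | O => [[]]
  | S d' => map (fun p => fst p :: snd p) (list_prod (seq 0 B) (nat_tuples d' B))
  end.

Lemma length_nat_tuples d B : length (nat_tuples d B) = (B ^ d)%nat.
Proof.
  induction d as [|d IH]; simpl; [reflexivity|].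
  rewrite length_map, length_prod, length_seq, IH. reflexivity.
Qed.

Lemma in_nat_tuples d B c : length c = d -> (forall e, In e c -> (e < B)%nat) ->
  In c (nat_tuples d B).
Proof.
  revert c; induction d as [|d IH]; intros [|e c] Hl Hc; simpl in *; try lia; auto.
  apply in_map_iff. exists (e, c). split; [reflexivity|].
  apply in_prod; [apply in_seq; specialize (Hc e (or_introl eq_refl)); lia|].
  apply IH; auto.
Qed.

Lemma length_le_of_injective_tuples {A} (f : A -> list nat) (l : list A) d B :
  NoDup l -> (forall a, In a l -> In (f a) (nat_tuples d B)) ->
  (forall a b, In a l -> In b l -> f a = f b -> a = b) ->
  (length l <= B ^ d)%nat.
Proof.
  intros Hnd Hin Hinj. rewrite <- length_nat_tuples, <- (length_map f l).
  apply NoDup_incl_length.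
  - apply NoDup_map_NoDup_ForallPairs; [intros a b Ha Hb; apply Hinj; auto|exact Hnd].
  - intros c Hc. apply in_map_iff in Hc. destruct Hc as [a [<- Ha]]. auto.
Qed.

Definition grid_cell D (h : R) (x : point) : list nat :=
  map (fun t => floor_nat (x t / h)) (seq 0 D).

Lemma grid_cell_in_tuples D B h x : 0 < h ->
  (forall t, (t < D)%nat -> 0 <= x t < INR B * h) -> In (grid_cell D h x) (nat_tuples D B).
Proof.
  intros Hh Hx. apply in_nat_tuples; [unfold grid_cell; rewrite length_map, length_seq; reflexivity|].
  intros e He. unfold grid_cell in He. apply in_map_iff in He. destruct He as [t [<- Ht]].
  apply in_seq in Ht. destruct (Hx t ltac:(lia)) as [Hx0 HxB].
  assert (Hlt : x t / h < INR B).
  { apply Rmult_lt_reg_r with h; [lra|]. unfold Rdiv. rewrite Rmult_assoc, Rinv_l; lra. }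
  destruct (floor_nat_spec (x t / h)) as [Hfl _]; [apply Rle_mult_inv_pos; lra|].
  apply INR_lt. lra.
Qed.

Lemma grid_cell_eq_close D h x y : 0 < h ->
  (forall t, (t < D)%nat -> 0 <= x t /\ 0 <= y t) -> grid_cell D h x = grid_cell D h y ->
  forall t, (t < D)%nat -> Rabs (x t - y t) < h.
Proof.
  intros Hh Hxy Heq t Ht.
  pose proof (ext_in_map Heq t ltac:(apply in_seq; lia)) as Hfl. simpl in Hfl.
  destruct (Hxy t Ht) as [Hx Hy].
  destruct (floor_nat_spec (x t / h)) as [Hx1 Hx2]; [apply Rle_mult_inv_pos; lra|].
  destruct (floor_nat_spec (y t / h)) as [Hy1 Hy2]; [apply Rle_mult_inv_pos; lra|].
  rewrite Hfl in Hx1, Hx2.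
  assert (Hdiff : Rabs (x t / h - y t / h) < 1) by (apply Rabs_def1; lra).
  replace (x t - y t) with (h * (x t / h - y t / h)) by (field; lra).
  rewrite Rabs_mult, Rabs_right by lra.
  apply Rlt_le_trans with (h * 1); [apply Rmult_lt_compat_l|]; lra.
Qed.

Lemma exists_min_in_list {A} (f : A -> R) (Q : A -> Prop) (l : list A) :
  (exists x, In x l /\ Q x) ->
  exists y, In y l /\ Q y /\ forall z, In z l -> Q z -> f y <= f z.
Proof.
  induction l as [|a l IH]; intros [x [Hx HQx]]; [destruct Hx|].
  destruct (classic (exists x, In x l /\ Q x)) as [Hl|Hl].
  - destruct (IH Hl) as [y [Hy [HQy Hmin]]].
    destruct (classic (Q a /\ f a <= f y)) as [[HQa Ha]|Ha].
    + exists a. split; [left; reflexivity|]. split; [exact HQa|].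
      intros z [<-|Hz] HQz; [lra|]. specialize (Hmin z Hz HQz). lra.
    + exists y. split; [right; exact Hy|]. split; [exact HQy|].
      intros z [<-|Hz] HQz; [|auto].
      destruct (Rle_or_lt (f y) (f a)); [assumption|]. exfalso. apply Ha. split; [exact HQz|lra].
  - exists a. split; [left; reflexivity|]. split.
    + destruct Hx as [<-|Hx]; [exact HQx|]. exfalso. apply Hl. eauto.
    + intros z [<-|Hz] HQz; [lra|]. exfalso. apply Hl. eauto.
Qed.

Lemma exists_partial_choice {A B} (Rel : A -> B -> Prop) (l : list A) :
  exists l', (length l' <= length l)%nat /\
    (forall b, In b l' -> exists a, In a l /\ Rel a b) /\
    (forall a, In a l -> (exists b, Rel a b) -> exists b, In b l' /\ Rel a b).
Proof.
  induction l as [|a l [l' [Hlen [Hsound Hcomplete]]]].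
  - exists []. simpl. split; [lia|tauto].
  - destruct (classic (exists b, Rel a b)) as [[b Hb]|Hnone].
    + exists (b :: l'). simpl. split; [lia|split].
      * intros b' [<-|Hb']; [eauto|]. destruct (Hsound b' Hb') as [a' [Ha' Hr]]; eauto.
      * intros a' [<-|Ha'] Hex; [eauto|]. destruct (Hcomplete a' Ha' Hex) as [b' [Hb' Hr]]; eauto.
    + exists l'. simpl. split; [lia|split].
      * intros b' Hb'. destruct (Hsound b' Hb') as [a' [Ha' Hr]]; eauto.
      * intros a' [<-|Ha'] Hex; [contradiction|auto].
Qed.

Lemma exists_min_dist D n P : (2 <= n)%nat ->
  exists dl, (exists a b, (a < n)%nat /\ (b < n)%nat /\ a <> b /\ dist D (P a) (P b) = dl) /\
    forall i j, (i < n)%nat -> (j < n)%nat -> i <> j -> dl <= dist D (P i) (P j).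
Proof.
  intros Hn.
  destruct (exists_min_in_list (fun ab => dist D (P (fst ab)) (P (snd ab)))
              (fun ab => fst ab <> snd ab) (list_prod (seq 0 n) (seq 0 n)))
    as [[a b] [Hab [Hne Hmin]]].
  { exists (0%nat, 1%nat). split; [apply in_prod; apply in_seq; lia|simpl; lia]. }
  apply in_prod_iff in Hab as [Ha Hb]. apply in_seq in Ha, Hb. simpl in Hne.
  exists (dist D (P a) (P b)). split; [exists a, b; repeat split; auto; lia|].
  intros i j Hi Hj Hij. apply (Hmin (i, j)); [apply in_prod; apply in_seq; lia|exact Hij].
Qed.

Definition walk_within D (P : nat -> point) (E : list (nat * nat)) (u v : nat) (L : R) : Prop :=
  exists rest, walk_ok E (u :: rest) /\ last (u :: rest) u = v /\ walk_len D P (u :: rest) <= L.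

Lemma last_cons_default {A} (x : A) r d d' : last (x :: r) d = last (x :: r) d'.
Proof. revert x; induction r as [|y r IH]; intros x; [reflexivity|]. apply (IH y). Qed.

Section Walks.
Variables (D : nat) (P : nat -> point) (E : list (nat * nat)).

Lemma walk_within_refl u L : 0 <= L -> walk_within D P E u u L.
Proof. intros HL. exists []. simpl. auto. Qed.

Lemma walk_within_edge u v : In (u, v) E \/ In (v, u) E ->
  walk_within D P E u v (dist D (P u) (P v)).
Proof. intros He. exists [v]. simpl. repeat split; auto. lra. Qed.

Lemma walk_within_weaken u v L L' : L <= L' -> walk_within D P E u v L -> walk_within D P E u v L'.
Proof. intros HL [r [Hok [Hlast Hlen]]]. exists r. repeat split; auto. lra. Qed.

Lemma walk_within_cons u x v L : In (u, x) E \/ In (x, u) E -> walk_within D P E x v L ->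
  walk_within D P E u v (dist D (P u) (P x) + L).
Proof.
  intros He [r [Hok [Hlast Hlen]]]. exists (x :: r). split; [exact (conj He Hok)|split].
  - change (last (x :: r) u = v). rewrite (last_cons_default x r u x). exact Hlast.
  - change (dist D (P u) (P x) + walk_len D P (x :: r) <= dist D (P u) (P x) + L). lra.
Qed.

Lemma walk_within_trans u w v L1 L2 :
  walk_within D P E u w L1 -> walk_within D P E w v L2 -> walk_within D P E u v (L1 + L2).
Proof.
  intros [r [Hok [Hlast Hlen]]]. revert u L1 Hok Hlast Hlen.
  induction r as [|x r IH]; intros u L1 Hok Hlast Hlen Hwv.
  - simpl in Hlast, Hlen. subst w. apply walk_within_weaken with L2; [lra|exact Hwv].
  - destruct Hok as [He Hok].
    change (last (x :: r) u = w) in Hlast. rewrite (last_cons_default x r u x) in Hlast.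
    change (dist D (P u) (P x) + walk_len D P (x :: r) <= L1) in Hlen.
    apply walk_within_weaken with (dist D (P u) (P x) + ((L1 - dist D (P u) (P x)) + L2)); [lra|].
    apply walk_within_cons; [exact He|]. apply (IH x); auto. lra.
Qed.

End Walks.

Lemma walk_within_incl D P E E' u v L : incl E E' -> walk_within D P E u v L -> walk_within D P E' u v L.
Proof.
  intros Hincl [r [Hok Hrest]]. exists r. split; [|exact Hrest]. clear Hrest.
  revert u Hok; induction r as [|x r IH]; intros u Hok; [exact I|].
  destruct Hok as [He Hok]. split; [destruct He; auto|exact (IH x Hok)].
Qed.

Lemma Delta_le_of_edges_le D n P k t E : (2 <= n)%nat -> (length E <= n - 1 + k)%nat ->
  graph_wf n E -> dilation_le D n P E t -> Delta_le D n P k t.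
Proof.
  intros Hn Hlen Hwf Hdil. exists (E ++ repeat (0%nat, 1%nat) (n - 1 + k - length E)).
  split; [rewrite length_app, repeat_length; lia|split].
  - intros e He. apply in_app_or in He as [He|He]; [auto|]. apply repeat_spec in He. subst e. simpl. lia.
  - intros u v Hu Hv Huv. apply walk_within_incl with E; [apply incl_appl, incl_refl|]. apply Hdil; auto.
Qed.

Lemma Delta_le_star D n P k s t : (2 <= n)%nat -> spread_le D n P s ->
  (forall u v, (u < n)%nat -> (v < n)%nat -> u <> v ->
     2 * s * dist D (P u) (P v) <= t * dist D (P u) (P v)) ->
  Delta_le D n P k t.
Proof.
  intros Hn Hs Ht. set (star := map (fun i => (i, 0%nat)) (seq 1 (n - 1))).
  assert (Hhub : forall i, (i < n)%nat -> walk_within D P star i 0 (dist D (P i) (P 0%nat))).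
  { intros i Hi. destruct (Nat.eq_dec i 0) as [->|Hi0].
    - apply walk_within_refl, dist_nonneg.
    - apply walk_within_edge. left. apply in_map_iff. exists i. split; [reflexivity|]. apply in_seq. lia. }
  apply Delta_le_of_edges_le with star; auto.
  - unfold star. rewrite length_map, length_seq. lia.
  - intros e He. apply in_map_iff in He as [i [<- Hi]]. apply in_seq in Hi. simpl. lia.
  - intros u v Hu Hv Huv.
    assert (Hspoke : forall i, (i < n)%nat -> dist D (P i) (P 0%nat) <= s * dist D (P u) (P v)).
    { intros i Hi. destruct (Nat.eq_dec i 0) as [->|Hi0]; [|apply Hs; auto; lia].
      rewrite dist_self. pose proof (Hs u v u v Hu Hv Hu Hv Huv Huv). pose proof (dist_nonneg D (P u) (P v)). lra. }
    apply walk_within_weaken with (dist D (P u) (P 0%nat) + dist D (P 0%nat) (P v)).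
    + rewrite (dist_sym D (P 0%nat)). pose proof (Hspoke u Hu). pose proof (Hspoke v Hv).
      specialize (Ht u v Hu Hv Huv). lra.
    + apply walk_within_trans with 0%nat; [apply Hhub; auto|].
      destruct (Nat.eq_dec v 0) as [->|Hv0]; [apply walk_within_refl; rewrite dist_self; lra|].
      apply walk_within_edge. right. apply in_map_iff. exists v. split; [reflexivity|]. apply in_seq. lia.
Qed.

Section Clusters.
Variables (n : nat) (key : nat -> list nat).

Definition same_key (i j : nat) : bool :=
  if list_eq_dec Nat.eq_dec (key i) (key j) then true else false.

Definition cluster_rep (j : nat) : nat := hd 0%nat (filter (fun i => same_key i j) (seq 0 n)).

Lemma cluster_rep_spec j : (j < n)%nat -> (cluster_rep j < n)%nat /\ key (cluster_rep j) = key j.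
Proof.
  intros Hj. unfold cluster_rep.
  assert (Hin : In j (filter (fun i => same_key i j) (seq 0 n))).
  { apply filter_In. split; [apply in_seq; lia|]. unfold same_key. destruct list_eq_dec; congruence. }
  destruct (filter (fun i => same_key i j) (seq 0 n)) as [|r l] eqn:Hl; [destruct Hin|].
  assert (Hr : In r (filter (fun i => same_key i j) (seq 0 n))) by (rewrite Hl; left; reflexivity).
  apply filter_In in Hr as [Hr Hkey]. apply in_seq in Hr. unfold same_key in Hkey.
  destruct list_eq_dec; [simpl; split; [lia|assumption]|discriminate].
Qed.

Lemma cluster_rep_congr i j : key i = key j -> cluster_rep i = cluster_rep j.
Proof. intros Hij. unfold cluster_rep, same_key. rewrite Hij. reflexivity. Qed.

Lemma exists_cluster_star : exists S E,
  NoDup S /\ (forall i, In i S -> (i < n)%nat) /\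
  (forall a b, In a S -> In b S -> key a = key b -> a = b) /\
  (length E + length S = n)%nat /\ graph_wf n E /\
  forall j, (j < n)%nat -> exists r, In r S /\ key r = key j /\ (r = j \/ In (j, r) E).
Proof.
  set (is_rep j := Nat.eqb (cluster_rep j) j).
  exists (filter is_rep (seq 0 n)),
         (map (fun j => (j, cluster_rep j)) (filter (fun j => negb (is_rep j)) (seq 0 n))).
  split; [apply NoDup_filter, seq_NoDup|split; [|split; [|split; [|split]]]].
  - intros i Hi. apply filter_In in Hi as [Hi _]. apply in_seq in Hi. lia.
  - intros a b Ha Hb Hab. apply filter_In in Ha as [_ Ha], Hb as [_ Hb].
    apply Nat.eqb_eq in Ha, Hb. rewrite <- Ha, <- Hb. apply cluster_rep_congr, Hab.
  - rewrite length_map, Nat.add_comm, filter_length, length_seq. reflexivity.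
  - intros e He. apply in_map_iff in He as [j [<- Hj]]. apply filter_In in Hj as [Hj Hnrep].
    apply in_seq in Hj. destruct (cluster_rep_spec j ltac:(lia)) as [Hr _].
    unfold is_rep in Hnrep. destruct (Nat.eqb_spec (cluster_rep j) j); simpl in *; [discriminate|lia].
  - intros j Hj. destruct (cluster_rep_spec j Hj) as [Hr Hkey].
    exists (cluster_rep j). split; [|split; [exact Hkey|]].
    + apply filter_In. split; [apply in_seq; lia|]. apply Nat.eqb_eq, cluster_rep_congr, Hkey.
    + destruct (Nat.eq_dec (cluster_rep j) j) as [Heq|Hne]; [left; exact Heq|right].
      apply in_map_iff. exists j. split; [reflexivity|]. apply filter_In. split; [apply in_seq; lia|].
      unfold is_rep. destruct (Nat.eqb_spec (cluster_rep j) j); [contradiction|reflexivity].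
Qed.

End Clusters.

(* Yao cones: the grid cell, at mesh [1 / (2D)], of the unit direction from [x] to [y] shifted into [[0, 2]^D]. *)
Definition cone D (x y : point) : list nat :=
  grid_cell D (/ (2 * INR D)) (fun t => (y t - x t) / dist D x y + 1).

Definition cone_count (D : nat) : nat := ((4 * D + 1) ^ D)%nat.

Lemma direction_coord_bound D x y t : (t < D)%nat -> Rabs ((y t - x t) / dist D x y) <= 1.
Proof.
  intros Ht. destruct (Req_dec (dist D x y) 0) as [H0|H0].
  - rewrite H0. unfold Rdiv. rewrite Rinv_0, Rmult_0_r, Rabs_R0. lra.
  - pose proof (dist_nonneg D x y).
    unfold Rdiv. rewrite Rabs_mult, Rabs_inv, (Rabs_right (dist D x y)) by lra.
    apply Rmult_le_reg_r with (dist D x y); [lra|].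
    rewrite Rmult_assoc, Rinv_l, Rmult_1_r, Rmult_1_l by lra.
    rewrite dist_sym. apply dist_coord_le, Ht.
Qed.

Lemma cone_in_tuples D x y : In (cone D x y) (nat_tuples D (4 * D + 1)).
Proof.
  destruct (Nat.eq_dec D 0) as [->|HD0]; [left; reflexivity|].
  assert (HD : 0 < INR D) by (apply lt_0_INR; lia).
  apply grid_cell_in_tuples; [apply Rinv_0_lt_compat; lra|].
  intros t Ht. pose proof (Rabs_le_bounds _ _ (direction_coord_bound D x y t Ht)).
  replace (INR (4 * D + 1) * / (2 * INR D)) with (2 + / (2 * INR D))
    by (rewrite plus_INR, mult_INR, INR_1; replace (INR 4) with 4 by (simpl; lra); field; lra).
  pose proof (Rinv_0_lt_compat (2 * INR D)). lra.
Qed.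

Lemma cone_eq_close D x v w : cone D x w = cone D x v -> forall t, (t < D)%nat ->
  Rabs ((w t - x t) / dist D x w - (v t - x t) / dist D x v) <= / (2 * INR D).
Proof.
  intros Heq t Ht. assert (HD : 0 < INR D) by (apply lt_0_INR; lia).
  assert (Hshift : forall y t', (t' < D)%nat -> 0 <= (y t' - x t') / dist D x y + 1).
  { intros y t' Ht'. pose proof (Rabs_le_bounds _ _ (direction_coord_bound D x y t' Ht')). lra. }
  assert (Hmesh : 0 < / (2 * INR D)) by (apply Rinv_0_lt_compat; lra).
  pose proof (grid_cell_eq_close D _ _ _ Hmesh
                (fun t' Ht' => conj (Hshift w t' Ht') (Hshift v t' Ht')) Heq t Ht) as Hclose.
  replace ((w t - x t) / dist D x w - (v t - x t) / dist D x v)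
    with ((w t - x t) / dist D x w + 1 - ((v t - x t) / dist D x v + 1)) by ring.
  lra.
Qed.

Section Yao.
Variables (D : nat) (P : nat -> point) (E : list (nat * nat)) (S : list nat) (dl : R).
Hypothesis dl_pos : 0 < dl.
Hypothesis S_separated : forall i j, In i S -> In j S -> i <> j -> dl <= dist D (P i) (P j).
Hypothesis E_yao : forall u w, In u S -> In w S -> u <> w ->
  exists w', In (u, w') E /\ In w' S /\ w' <> u /\
    cone D (P u) (P w') = cone D (P u) (P w) /\ dist D (P u) (P w') <= dist D (P u) (P w).

Lemma yao_walk_within : forall u v, In u S -> In v S -> u <> v ->
  walk_within D P E u v (2 * dist D (P u) (P v)).
Proof.
  (* Each greedy step brings the walk at least [dl / 2] closer to [v]. *)
  assert (Hsteps : forall N u v, In u S -> In v S -> u <> v ->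
            dist D (P u) (P v) < INR N * (dl / 2) -> walk_within D P E u v (2 * dist D (P u) (P v))).
  { induction N as [|N IH]; intros u v Hu Hv Huv Hlt.
    - pose proof (dist_nonneg D (P u) (P v)). simpl in Hlt. lra.
    - destruct (E_yao u v Hu Hv Huv) as [w [Hedge [Hw [Hwu [Hcone Hnear]]]]].
      destruct (Nat.eq_dec w v) as [->|Hwv].
      + apply walk_within_weaken with (dist D (P u) (P v)); [pose proof (dist_nonneg D (P u) (P v)); lra|].
        apply walk_within_edge. left. exact Hedge.
      + assert (Huw : dl <= dist D (P u) (P w)) by (apply S_separated; auto).
        assert (Hcloser : dist D (P w) (P v) <= dist D (P u) (P v) - dist D (P u) (P w) / 2).
        { apply dist_le_of_close_directions; [lra|exact Hnear|]. apply cone_eq_close, Hcone. }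
        apply walk_within_weaken with (dist D (P u) (P w) + 2 * dist D (P w) (P v)); [lra|].
        apply walk_within_cons; [left; exact Hedge|].
        apply IH; auto. rewrite S_INR in Hlt. lra. }
  intros u v Hu Hv Huv. destruct (INR_archimed (dl / 2) (dist D (P u) (P v))) as [N HN]; [lra|].
  apply (Hsteps N); auto.
Qed.

End Yao.

Lemma exists_yao_spanner D n P S dl : 0 < dl -> (forall i, In i S -> (i < n)%nat) ->
  (forall i j, In i S -> In j S -> i <> j -> dl <= dist D (P i) (P j)) ->
  exists E, (length E <= length S * cone_count D)%nat /\ graph_wf n E /\
    forall u v, In u S -> In v S -> u <> v -> walk_within D P E u v (2 * dist D (P u) (P v)).
Proof.
  intros Hdl HS Hsep.
  set (nearest (uc : nat * list nat) (e : nat * nat) :=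
         fst e = fst uc /\ In (snd e) S /\ snd e <> fst uc /\
         cone D (P (fst uc)) (P (snd e)) = snd uc /\
         forall z, In z S -> z <> fst uc -> cone D (P (fst uc)) (P z) = snd uc ->
           dist D (P (fst uc)) (P (snd e)) <= dist D (P (fst uc)) (P z)).
  destruct (exists_partial_choice nearest (list_prod S (nat_tuples D (4 * D + 1))))
    as [E [Hlen [Hsound Hcomplete]]].
  exists E. split; [rewrite length_prod, length_nat_tuples in Hlen; exact Hlen|split].
  - intros e He. destruct (Hsound e He) as [[u c] [Huc [Hfst [Hsnd [Hne _]]]]].
    apply in_prod_iff in Huc as [Hu _]. simpl in *. rewrite Hfst.
    repeat split; auto.
  - apply yao_walk_within with dl; auto.
    intros u w Hu Hw Huw.
    destruct (Hcomplete (u, cone D (P u) (P w))) as [[u' w'] [He [Hfst [Hw' [Hne [Hcone Hmin]]]]]].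
    + apply in_prod; [exact Hu|apply cone_in_tuples].
    + destruct (exists_min_in_list (fun z => dist D (P u) (P z))
                  (fun z => z <> u /\ cone D (P u) (P z) = cone D (P u) (P w)) S)
        as [z [Hz [[Hzu Hzc] Hzmin]]]; [exists w; auto|].
      exists (u, z). repeat split; auto.
    + simpl in *. subst u'. exists w'. repeat split; auto.
Qed.

Definition cell D (P : nat -> point) (rad h : R) (j : nat) : list nat :=
  grid_cell D h (fun t => P j t - P 0%nat t + rad).

Section Cells.
Variables (D n : nat) (P : nat -> point) (rad h : R).
Hypothesis h_pos : 0 < h.
Hypothesis rad_nonneg : 0 <= rad.
Hypothesis rad_bound : forall i, (i < n)%nat -> dist D (P 0%nat) (P i) <= rad.

Lemma cell_coord_bounds i t : (i < n)%nat -> (t < D)%nat -> 0 <= P i t - P 0%nat t + rad <= 2 * rad.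
Proof.
  intros Hi Ht. pose proof (dist_coord_le D (P i) (P 0%nat) t Ht) as Hc.
  rewrite dist_sym in Hc. specialize (rad_bound i Hi). apply Rabs_le_bounds in Hc. lra.
Qed.

Lemma dist_le_of_cell_eq i j : (i < n)%nat -> (j < n)%nat ->
  cell D P rad h i = cell D P rad h j -> dist D (P i) (P j) <= INR D * h.
Proof.
  intros Hi Hj Heq. apply dist_le_of_coords; [lra|]. intros t Ht.
  assert (Hclose := grid_cell_eq_close D h _ _ h_pos
    (fun t' Ht' => conj (proj1 (cell_coord_bounds i t' Hi Ht')) (proj1 (cell_coord_bounds j t' Hj Ht')))
    Heq t Ht).
  replace (P i t - P j t) with (P i t - P 0%nat t + rad - (P j t - P 0%nat t + rad)) by ring.
  lra.
Qed.

Lemma length_le_of_cell_injective l : NoDup l -> (forall i, In i l -> (i < n)%nat) ->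
  (forall a b, In a l -> In b l -> cell D P rad h a = cell D P rad h b -> a = b) ->
  INR (length l) <= (2 * rad / h + 1) ^ D.
Proof.
  intros Hnd Hl Hinj. set (B := (floor_nat (2 * rad / h) + 1)%nat).
  assert (HB : 2 * rad / h < INR B <= 2 * rad / h + 1).
  { unfold B. rewrite plus_INR, INR_1.
    pose proof (floor_nat_spec (2 * rad / h) ltac:(apply Rle_mult_inv_pos; lra)). lra. }
  assert (Hlen : (length l <= B ^ D)%nat).
  { apply length_le_of_injective_tuples with (f := cell D P rad h); auto.
    intros a Ha. apply grid_cell_in_tuples; [exact h_pos|]. intros t Ht.
    destruct (cell_coord_bounds a t (Hl a Ha) Ht) as [Hlo Hhi]. split; [exact Hlo|].
    apply Rle_lt_trans with (2 * rad); [exact Hhi|].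
    replace (2 * rad) with (2 * rad / h * h) at 1 by (field; lra).
    apply Rmult_lt_compat_r; lra. }
  apply le_INR in Hlen. rewrite pow_INR in Hlen. eapply Rle_trans; [exact Hlen|].
  apply pow_incr. pose proof (pos_INR B). lra.
Qed.

End Cells.

Lemma card_le_of_separated D n P dl rad : (1 <= D)%nat -> 0 < dl -> 0 <= rad ->
  (forall i j, (i < n)%nat -> (j < n)%nat -> i <> j -> dl <= dist D (P i) (P j)) ->
  (forall i, (i < n)%nat -> dist D (P 0%nat) (P i) <= rad) ->
  INR n <= (4 * INR D * rad / dl + 1) ^ D.
Proof.
  intros HD Hdl Hrad Hsep Hbound.
  assert (HDr : 0 < INR D) by (apply lt_0_INR; lia).
  set (h := dl / (2 * INR D)). assert (Hh : 0 < h) by (unfold h; apply Rdiv_lt_0_compat; lra).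
  replace (4 * INR D * rad / dl) with (2 * rad / h) by (unfold h; field; lra).
  rewrite <- (length_seq n 0).
  apply length_le_of_cell_injective with n P; auto; [apply seq_NoDup|intros i Hi; apply in_seq in Hi; lia|].
  intros a b Ha Hb Hcell. apply in_seq in Ha, Hb.
  destruct (Nat.eq_dec a b) as [|Hab]; [assumption|exfalso].
  pose proof (dist_le_of_cell_eq D n P rad h Hh Hbound a b ltac:(lia) ltac:(lia) Hcell).
  pose proof (Hsep a b ltac:(lia) ltac:(lia) Hab).
  assert (INR D * h = dl / 2) by (unfold h; field; lra). lra.
Qed.

Lemma Delta_le_weaken D n P k t t' : t <= t' -> Delta_le D n P k t -> Delta_le D n P k t'.
Proof.
  intros Htt' [E [Hlen [Hwf Hdil]]]. exists E. split; [exact Hlen|split; [exact Hwf|]].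
  intros u v Hu Hv Huv. apply walk_within_weaken with (t * dist D (P u) (P v)); [|apply Hdil; auto].
  apply Rmult_le_compat_r; [apply dist_nonneg|exact Htt'].
Qed.

Lemma dilation_le_of_hubs D n P E S dl r : 0 < dl ->
  (forall i j, (i < n)%nat -> (j < n)%nat -> i <> j -> dl <= dist D (P i) (P j)) ->
  (forall j, (j < n)%nat -> exists c, In c S /\ dist D (P j) (P c) <= r /\
     walk_within D P E j c r /\ walk_within D P E c j r) ->
  (forall u v, In u S -> In v S -> u <> v -> walk_within D P E u v (2 * dist D (P u) (P v))) ->
  dilation_le D n P E (2 + 6 * r / dl).
Proof.
  intros Hdl Hsep Hhub Hspan u v Hu Hv Huv.
  destruct (Hhub u Hu) as [cu [Hcu [Hdu [Hwu _]]]]. destruct (Hhub v Hv) as [cv [Hcv [Hdv [_ Hwv]]]].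
  assert (Hr : 0 <= r) by (pose proof (dist_nonneg D (P u) (P cu)); lra).
  assert (Hcucv : dist D (P cu) (P cv) <= dist D (P u) (P v) + 2 * r).
  { pose proof (dist_triangle D (P cu) (P u) (P cv)). pose proof (dist_triangle D (P u) (P v) (P cv)).
    rewrite dist_sym in Hdu. lra. }
  assert (Hd : dl <= dist D (P u) (P v)) by (apply Hsep; auto).
  set (d := dist D (P u) (P v)) in *.
  assert (Hmid : walk_within D P E cu cv (2 * (d + 2 * r))).
  { destruct (Nat.eq_dec cu cv) as [<-|Hne]; [apply walk_within_refl; lra|].
    apply walk_within_weaken with (2 * dist D (P cu) (P cv)); [lra|]. apply Hspan; auto. }
  apply walk_within_weaken with (r + 2 * (d + 2 * r) + r).
  - assert (Hratio : 1 <= d / dl)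
      by (apply Rmult_le_reg_r with dl; [lra|]; unfold Rdiv; rewrite Rmult_assoc, Rinv_l; lra).
    replace ((2 + 6 * r / dl) * d) with (2 * d + 6 * r * (d / dl)) by (field; lra).
    nra.
  - apply walk_within_trans with cv; [apply walk_within_trans with cu|]; assumption.
Qed.

Lemma Delta_le_cluster_yao D n P k dl rad h : (2 <= n)%nat -> 0 < dl -> 0 <= rad -> 0 < h ->
  (forall i j, (i < n)%nat -> (j < n)%nat -> i <> j -> dl <= dist D (P i) (P j)) ->
  (forall i, (i < n)%nat -> dist D (P 0%nat) (P i) <= rad) ->
  (2 * rad / h + 1) ^ D * INR (cone_count D) <= INR k ->
  Delta_le D n P k (2 + 6 * (INR D * h) / dl).
Proof.
  intros Hn Hdl Hrad Hh Hsep Hbound Hbudget.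
  destruct (exists_cluster_star n (cell D P rad h)) as [S [E1 [HSnd [HSn [HSinj [Hcount [HE1 Hrep]]]]]]].
  assert (Hm : INR (length S) <= (2 * rad / h + 1) ^ D)
    by (apply length_le_of_cell_injective with n P; auto).
  assert (Hm1 : (1 <= length S)%nat).
  { destruct (Hrep 0%nat ltac:(lia)) as [r [Hr _]]. destruct S; [destruct Hr|simpl; lia]. }
  destruct (exists_yao_spanner D n P S dl) as [E2 [HE2len [HE2 Hyao]]]; auto.
  assert (Hk : (length S * cone_count D <= k)%nat).
  { apply INR_le. rewrite mult_INR. eapply Rle_trans; [|exact Hbudget].
    apply Rmult_le_compat_r; [apply pos_INR|exact Hm]. }
  apply Delta_le_of_edges_le with (E1 ++ E2); auto.
  - rewrite length_app. lia.
  - intros e He. apply in_app_or in He as [He|He]; auto.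
  - apply dilation_le_of_hubs with S; auto.
    + intros j Hj. destruct (Hrep j Hj) as [c [Hc [Hkey Hjc]]].
      assert (Hd : dist D (P j) (P c) <= INR D * h)
        by (apply (dist_le_of_cell_eq D n P rad h); auto; symmetry; exact Hkey).
      exists c. split; [exact Hc|split; [exact Hd|]].
      destruct Hjc as [<-|He]; [split; apply walk_within_refl; pose proof (dist_nonneg D (P c) (P c)); lra|].
      assert (HeE : In (j, c) (E1 ++ E2)) by (apply in_or_app; left; exact He).
      split; [|rewrite dist_sym in Hd];
        (eapply walk_within_weaken; [exact Hd|apply walk_within_edge; auto]).
    + intros u v Hu Hv Huv. apply walk_within_incl with E2; [apply incl_appr, incl_refl|]. auto.
Qed.

Lemma cells_times_cones_le K q D : 1 <= K -> 4 * K <= q -> (1 <= D)%nat ->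
  (q / (4 * K) + 1) ^ D * K <= q ^ D - 1.
Proof.
  intros HK Hq HD. set (a := q / (4 * K)).
  assert (Ha : 1 <= a) by (unfold a; apply Rmult_le_reg_r with (4 * K); [lra|]; field_simplify; lra).
  assert (Hpow : (a + 1) ^ D <= (2 * a) ^ D) by (apply pow_incr; lra).
  assert (H2K : 2 * K <= (2 * K) ^ D) by (rewrite <- (pow_1 (2 * K)) at 1; apply Rle_pow; [lra|lia]).
  assert (HqD : q ^ D = (2 * K) ^ D * (2 * a) ^ D)
    by (rewrite <- Rpow_mult_distr; f_equal; unfold a; field; lra).
  assert (Hq1 : q <= q ^ D) by (rewrite <- (pow_1 q) at 1; apply Rle_pow; [lra|lia]).
  assert (0 <= (2 * a) ^ D) by (apply pow_le; lra).
  nra.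
Qed.

Lemma pow_le_reg x y D : 0 <= x -> 0 <= y -> (1 <= D)%nat -> x ^ D <= y ^ D -> x <= y.
Proof.
  intros Hx Hy HD Hpow. destruct (Rle_or_lt x y) as [|Hlt]; [assumption|exfalso].
  destruct D as [|D']; [lia|]. simpl in Hpow.
  assert (y ^ D' <= x ^ D') by (apply pow_incr; lra).
  assert (0 < x ^ D') by (apply pow_lt; lra). nra.
Qed.

Lemma Rpower_inv_pow x D : 0 < x -> (1 <= D)%nat -> Rpower x (/ INR D) ^ D = x.
Proof.
  intros Hx HD. rewrite <- Rpower_pow by (unfold Rpower; apply exp_pos).
  rewrite Rpower_mult, Rinv_l by (apply not_0_INR; lia). apply Rpower_1, Hx.
Qed.

Lemma cone_count_ge_1 D : 1 <= INR (cone_count D).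
Proof. apply (le_INR 1). unfold cone_count. pose proof (Nat.pow_nonzero (4 * D + 1) D). lia. Qed.

Lemma Delta_le_large_k D n P k s dl q : (1 <= D)%nat -> (2 <= n)%nat -> (k < n)%nat -> 0 < dl ->
  (forall i j, (i < n)%nat -> (j < n)%nat -> i <> j -> dl <= dist D (P i) (P j)) ->
  (forall i j, (i < n)%nat -> (j < n)%nat -> i <> j -> dist D (P i) (P j) <= s * dl) ->
  0 < q -> q ^ D = INR (k + 1) -> 34 * INR (cone_count D) * INR D < q ->
  Delta_le D n P k (68 * INR (cone_count D) * INR D * s / q).
Proof.
  intros HD Hn Hk Hdl Hsep Hdiam Hq HqD Hlarge.
  set (K := INR (cone_count D)) in *. assert (HK : 1 <= K) by apply cone_count_ge_1.
  assert (HDr : 1 <= INR D) by (apply (le_INR 1); lia).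
  assert (Hs : 1 <= s).
  { pose proof (Hsep 0%nat 1%nat ltac:(lia) ltac:(lia) ltac:(lia)).
    pose proof (Hdiam 0%nat 1%nat ltac:(lia) ltac:(lia) ltac:(lia)). nra. }
  assert (Hrad : forall i, (i < n)%nat -> dist D (P 0%nat) (P i) <= s * dl).
  { intros i Hi. destruct (Nat.eq_dec i 0) as [->|Hi0]; [rewrite dist_self; nra|apply Hdiam; lia]. }
  assert (Hpacked : q <= 5 * INR D * s).
  { apply pow_le_reg with D; [lra|nra|exact HD|].
    rewrite HqD. apply Rle_trans with (INR n); [apply le_INR; lia|].
    eapply Rle_trans; [apply (card_le_of_separated D n P dl (s * dl)); auto; nra|].
    replace (4 * INR D * (s * dl) / dl) with (4 * INR D * s) by (field; lra).
    apply pow_incr. nra. }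
  (* The side [h] makes the grid of [cell] have [q / (4K)] cells per axis. *)
  set (h := 8 * K * s * dl / q).
  apply Delta_le_weaken with (2 + 6 * (INR D * h) / dl).
  - replace (6 * (INR D * h) / dl) with (48 * K * INR D * s / q) by (unfold h; field; lra).
    assert (2 <= 20 * K * INR D * s / q).
    { apply Rmult_le_reg_r with q; [lra|]. unfold Rdiv. rewrite Rmult_assoc, Rinv_l; nra. }
    replace (68 * K * INR D * s / q) with (48 * K * INR D * s / q + 20 * K * INR D * s / q)
      by (field; lra). lra.
  - assert (HKs : 0 < K * s * dl) by (assert (0 < K * s) by nra; nra).
    apply Delta_le_cluster_yao with (rad := s * dl); auto; [nra|unfold h; apply Rdiv_lt_0_compat; lra|].
    replace (2 * (s * dl) / h) with (q / (4 * K)) by (unfold h; field; lra).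
    fold K. replace (INR k) with (q ^ D - 1) by (rewrite HqD, plus_INR, INR_1; ring).
    apply cells_times_cones_le; [exact HK|nra|exact HD].
Qed.

Theorem theorem6 :
  forall D : nat, (2 <= D)%nat ->
  exists C : R, 0 < C /\
    forall (n : nat) (s : R) (k : nat), (2 <= n)%nat -> (k < n)%nat ->
    forall P : nat -> point,
      distinct_points n P -> spread_le D n P s ->
      Delta_le D n P k (C * s / Rpower (INR (k + 1)) (/ INR D)).
Proof.
  intros D HD.
  set (K := INR (cone_count D)). assert (HK : 1 <= K) by apply cone_count_ge_1.
  assert (HDr : 1 <= INR D) by (apply (le_INR 1); lia).
  exists (68 * K * INR D). split; [nra|].
  intros n s k Hn Hk P _ Hs.
  set (q := Rpower (INR (k + 1)) (/ INR D)).
  assert (Hq : 0 < q) by apply exp_pos.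
  assert (HqD : q ^ D = INR (k + 1)) by (apply Rpower_inv_pow; [apply lt_0_INR|]; lia).
  destruct (exists_min_dist D n P Hn) as [dl [[a [b [Ha [Hb [Hab Hdl]]]]] Hsep]].
  assert (Hdiam : forall i j, (i < n)%nat -> (j < n)%nat -> i <> j -> dist D (P i) (P j) <= s * dl)
    by (intros; rewrite <- Hdl; apply Hs; auto).
  destruct (Req_dec dl 0) as [Hdl0|Hdl0].
  (* All distances vanish; only coordinates beyond [D] tell the points apart. *)
  - apply Delta_le_star with s; auto. intros u v Hu Hv Huv.
    assert (Hzero : dist D (P u) (P v) = 0)
      by (pose proof (Hdiam u v Hu Hv Huv); pose proof (dist_nonneg D (P u) (P v)); nra).
    rewrite Hzero. lra.
  - assert (Hs1 : 1 <= s).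
    { pose proof (Hdiam a b Ha Hb Hab). pose proof (dist_nonneg D (P a) (P b)). rewrite Hdl in *. nra. }
    destruct (Rle_or_lt q (34 * K * INR D)) as [Hsmall|Hlarge].
    + apply Delta_le_star with s; auto. intros u v Hu Hv Huv.
      apply Rmult_le_compat_r; [apply dist_nonneg|].
      apply Rmult_le_reg_r with q; [exact Hq|].
      replace (68 * K * INR D * s / q * q) with (68 * K * INR D * s) by (field; lra). nra.
    + apply Delta_le_large_k with dl; auto; [lia|].
      pose proof (dist_nonneg D (P a) (P b)). lra.
Qed.
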